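(* Let $(R,B)$ be an EIC problem with problem graph $G=(V,E)$ and sender neighborhoods $N_1,\dots,N_n$, and let $\mathscr C=\{V(C): C \text{ is a maximal clique in } G|_{N_i}\text{ for some } i\}$. For every neighborhood partition $(\tilde N_1,\dots,\tilde N_n)$ there exists a cover $\mathcal C$ of $V$ by elements of $\mathscr C$ such that $$\sum_{C_j\in\mathcal C}\chi\big(\overline{G|_{C_j}}\big)=\sum_{i=1}^n\chi\big(\overline{G|_{\tilde N_i}}\big).$$
   Context: An EIC problem is a pair $(R,B)$ of matrices in $\mathbb{F}_2^{n\times m}$ with disjoint supports (node $u$ needs block $a$ iff $R_{ua}=1$, has it iff $B_{ua}=1$). $P=\{(u,a):R_{ua}=1\}$. The problem graph $G=(V,E)$ has vertices $V=\{v_{(u,a)}:(u,a)\in P\}$ and a directed edge from $v_{(u,a)}$ to $v_{(w,b)}$ iff $B_{ub}=1$ or $a=b$; $G|_S$ is the subgraph induced on $S$. Sender neighborhood of node $k$: $N_k=\{v_{(w,b)}\in V:B_{kb}=1\}$. A neighborhood partition is a tuple $(\tilde N_1,\dots,\tilde N_n)$ with $\tilde N_i\subseteq N_i$, pairwise disjoint, union $V$. For a directed graph $H$ (loops disregarded): $\overline H$ has edge $(x,y)$, $x\ne y$, iff $(x,y)\notin E(H)$; a clique is a vertex set in which every ordered pair of distinct vertices is an edge (maximal if not properly contained in another clique); an independent set contains no edge in either direction; $\chi(H)$ is the minimum number of independent sets partitioning the vertex set ($0$ if empty). A cover of $V$ by elements of $\mathscr C$ is a collection of members of $\mathscr C$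 whose union is $V$. *)

From mathcomp Require Import all_boot all_algebra.
Set Implicit Arguments. Unset Strict Implicit. Unset Printing Implicit Defensive.
Import GRing.Theory.
Local Open Scope ring_scope.

(* Vertices of a problem graph are pairs (u,a) : 'I_n * 'I_m. *)
Definition pair_t (n m : nat) := ('I_n * 'I_m)%type.

Section EIC.
Variables (n m : nat) (R B : 'M['F_2]_(n, m)).

Definition probV : {set pair_t n m} := [set p | R p.1 p.2 == 1].

Definition Gedge : rel (pair_t n m) :=
  fun p q => [&& p \in probV, q \in probV & (B p.1 q.2 == 1) || (p.2 == q.2)].

Definition sendN (k : 'I_n) : {set pair_t n m} :=
  [set q in probV | B k q.2 == 1].
End EIC.

Section Graphs.
Variable T : finType.

(* a directed graph is given by a vertex set S and a relation e (loops disregarded) *)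

Definition clique (e : rel T) (C : {set T}) : bool :=
  [forall x in C, forall y in C, (x != y) ==> e x y].

Definition indep (e : rel T) (A : {set T}) : bool :=
  [forall x in A, forall y in A, (x != y) ==> ~~ e x y].

Definition compl_rel (e : rel T) : rel T := fun x y => (x != y) && ~~ e x y.

(* The singleton partition
   (of size #|S|) is always admissible, so #|S| is a valid initial bound. *)
Definition chi (S : {set T}) (e : rel T) : nat :=
  \big[minn/#|S|]_(P : {set {set T}} | partition P S && [forall A in P, indep e A])
     #|P|.
End Graphs.

Definition scrC (n m : nat) (R B : 'M['F_2]_(n, m)) : {set {set pair_t n m}} :=
  [set C | [exists i : 'I_n,
     maxset (fun D : {set pair_t n m} => (D \subset sendN R B i) && clique (Gedge R B) D) C]].

From mathcomp Require Import all_boot all_algebra order.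
Import Order.TTheory GRing.Theory.

(* An optimal colouring of the complement of [G|_{Ñ_i}] is a partition of [Ñ_i]
   into [χ(\overline{G|_{Ñ_i}})] cliques of [G].  Extend each of these cliques
   to a maximal clique of [G|_{N_i}].  The complement of a nonempty clique has
   chromatic number 1, so the extended cliques, collected over all [i], cover
   [V] and contribute exactly [Σ_i χ(\overline{G|_{Ñ_i}})] to the sum. *)

Section ChromaticNumber.
Set Implicit Arguments. Unset Strict Implicit.
Variables (T : finType) (f : rel T).

Definition indep_partition (S : {set T}) (P : {set {set T}}) :=
  partition P S && [forall A in P, indep f A].

Lemma card_partition_le (P : {set {set T}}) (S : {set T}) :
  partition P S -> #|P| <= #|S|.
Proof.
move=> partP; rewrite (card_partition partP) -sum1_card; apply: leq_sum => A AP.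
by rewrite card_gt0 (partition_neq0 partP).
Qed.

Lemma indep_partition_preim_id (S : {set T}) :
  indep_partition S (preim_partition id S).
Proof.
rewrite /indep_partition preim_partitionP; apply/forall_inP => _ /imsetP[x _ ->].
apply/forall_inP => y; rewrite inE => /andP[_ /eqP <-].
by apply/forall_inP => z; rewrite inE => /andP[_ /eqP <-]; rewrite eqxx.
Qed.

Lemma chi_le S P : indep_partition S P -> chi S f <= #|P|.
Proof. exact: (@bigmin_le_cond _ nat _ _ _ (indep_partition S)). Qed.

Lemma chi_attained S : exists2 P, indep_partition S P & chi S f = #|P|.
Proof.
have le_card P : indep_partition S P -> #|P| <= #|S|.
  by case/andP=> /card_partition_le.
have [P ? chiP] := @eq_bigmin _ nat _ #|S| _ (indep_partition S) (fun P => #|P|)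
  (indep_partition_preim_id S) le_card.
by exists P.
Qed.

End ChromaticNumber.

Section CliqueCover.
Set Implicit Arguments. Unset Strict Implicit.
Variables (T : finType) (e : rel T).

Lemma indep_compl_rel A : indep (compl_rel e) A = clique e A.
Proof.
apply/forall_inP/forall_inP => h x xA; apply/forall_inP => y yA; apply/implyP => xy;
  have /forall_inP/(_ y yA)/implyP/(_ xy) := h x xA;
  by rewrite /compl_rel xy /= ?negbK // => ->.
Qed.

Lemma chi_compl_clique S : S != set0 -> clique e S -> chi S (compl_rel e) = 1.
Proof.
move=> S_neq0 cliqueS; apply/eqP; rewrite eqn_leq; apply/andP; split.
  rewrite -(cards1 S); apply: chi_le.
  rewrite /indep_partition /partition cover1 trivIset1 inE eq_sym S_neq0 eqxx /=.
  by apply/forall_inP => A /set1P ->; rewrite indep_compl_rel.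
have [P /andP[partP _] ->] := chi_attained (compl_rel e) S.
rewrite card_gt0; apply: contraNneq S_neq0 => P0.
by rewrite -(cover_partition partP) P0 /cover big_set0.
Qed.

Lemma optimal_clique_partition S :
  exists2 P, partition P S && [forall K in P, clique e K] &
             chi S (compl_rel e) = #|P|.
Proof.
have [P /andP[partP indepP] chiP] := chi_attained (compl_rel e) S.
exists P => //; rewrite partP; apply/forall_inP => K KP.
by rewrite -indep_compl_rel (forall_inP indepP).
Qed.

Variable N : {set T}.
Let clique_in_N (D : {set T}) := (D \subset N) && clique e D.

Lemma maximal_clique_cover (S : {set T}) : S \subset N ->
  exists cs : seq {set T},
    [/\ forall C, C \in cs -> maxset clique_in_N C,
        S \subset \bigcup_(C <- cs) C,
        \bigcup_(C <- cs) C \subset N &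
        \sum_(C <- cs) chi C (compl_rel e) = chi S (compl_rel e)].
Proof.
move=> SN; have [P /andP[partP cliqueP] ->] := optimal_clique_partition S.
have extend K : exists C, K \in P -> maxset clique_in_N C && (K \subset C).
  have [KP|] := boolP (K \in P); last by exists K.
  have KN : clique_in_N K.
    rewrite /clique_in_N (forall_inP cliqueP) // andbT.
    exact: subset_trans (partitionS partP KP) SN.
  by have [C maxC KC] := maxset_exists KN; exists C; rewrite maxC KC.
have [ext extP] := fin_all_exists extend.
have {}extP K : K \in P -> maxset clique_in_N (ext K) /\ K \subset ext K.
  by move=> /extP /andP.
exists [seq ext K | K <- enum P]; rewrite !big_map !big_enum /=; split.
- by move=> C /mapP[K]; rewrite mem_enum => /extP[maxK _] ->.
- rewrite -(cover_partition partP); apply/bigcupsP => K KP.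
  by apply: subset_trans (bigcup_sup K KP); case: (extP K KP).
- by apply/bigcupsP => K /extP[/maxsetp/andP[]].
- rewrite -sum1_card; apply: eq_bigr => K KP; have [/maxsetp/andP[_ cl] KC] := extP K KP.
  apply: chi_compl_clique cl; apply: contraTneq KC => ->.
  by rewrite subset0 (partition_neq0 partP).
Qed.

End CliqueCover.

Lemma sendN_subset (n m : nat) (R B : 'M['F_2]_(n, m)) i :
  sendN R B i \subset probV R.
Proof. by apply/subsetP => x; rewrite inE => /andP[]. Qed.

Local Open Scope ring_scope.

Theorem lemma6 (n m : nat) (R B : 'M['F_2]_(n, m))
  (hdisj : forall u a, (R u a == 0) || (B u a == 0))
  (Nt : 'I_n -> {set pair_t n m})
  (hsub : forall i, Nt i \subset sendN R B i)
  (hdis : forall i j, i != j -> [disjoint Nt i & Nt j])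
  (hcov : \bigcup_(i < n) Nt i = probV R) :
  exists cs : seq {set pair_t n m},
    [/\ forall C, C \in cs -> C \in scrC R B,
        \bigcup_(C <- cs) C = probV R &
        (\sum_(C <- cs) chi C (compl_rel (Gedge R B)) =
         \sum_(i < n) chi (Nt i) (compl_rel (Gedge R B)))%N].
Proof.
have [cs csP] := fin_all_exists (fun i => maximal_clique_cover (Gedge R B) (hsub i)).
exists (flatten [seq cs i | i <- index_enum 'I_n]).
rewrite !big_flatten !big_map /=; split.
- move=> C /flattenP[_ /mapP[i _ ->] Ci]; rewrite inE; apply/existsP; exists i.
  by case: (csP i) => + _ _ _; apply.
- apply/eqP; rewrite eqEsubset -{2}hcov; apply/andP; split; apply/bigcupsP => i _.
    by case: (csP i) => _ _ csN _; apply: subset_trans csN (sendN_subset R B i).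
  by case: (csP i) => _ Ntcs _ _; apply: subset_trans Ntcs (bigcup_sup i isT).
- by apply: eq_bigr => i _; case: (csP i).
Qed.
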